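(* Let $\theta:\mathbb{R}\to\mathbb{R}$ be continuously differentiable and strictly increasing, let $\tau,h_i,v^n>0$, set $\lambda=\tau v^n/h_i$, and write $\Theta_j^m=\theta(Q_j^m)$. Let $\bar w\in[0,1]$, $\Psi_{\mathrm{prev}}\in[0,2]$, $\tilde C>0$, and let $$\Psi(r)=\max\big\{0,\ \min\{(2\tilde C+\Psi_{\mathrm{prev}})\,r,\ 1-\bar w+\bar w r,\ 2\}\big\}.$$ Suppose real numbers $Q_i^n,Q_i^{n-1},Q_{i-1}^n,Q_{i-1}^{n+1}$ satisfy $$\Theta_i^n + \tfrac12\Psi(r_i^n)(\Theta_{i-1}^{n+1}-\Theta_i^n) + \lambda Q_i^n = \Theta_i^{n-1} + \tfrac12\Psi_{\mathrm{prev}}(\Theta_{i-1}^n-\Theta_i^{n-1}) + \lambda Q_{i-1}^n,\qquad r_i^n=\frac{\Theta_{i-1}^n-\Theta_i^{n-1}}{\Theta_{i-1}^{n+1}-\Theta_i^n},$$ (with the term $\Psi(r_i^n)(\Theta_{i-1}^{n+1}-\Theta_i^n)$ set to $0$ when $\Theta_{i-1}^{n+1}=\Theta_i^n$), and suppose $\tilde C\le C_i^n$, where $$C_i^n=\frac{Q_i^n-Q_{i-1}^n}{\Theta_i^n-\Theta_{i-1}^n}\,\lambda \ \text{ if } Q_i^n\ne Q_{i-1}^n,\qquad C_i^n=\frac{\lambda}{\theta'(Q_i^n)}\ \text{ if } Q_i^n=Q_{i-1}^n$$ (for instance $\tilde C=\lambda/M$ if $\theta'\le M$ on the relevant range). Then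 $$\min\{Q_i^{n-1},Q_{i-1}^n\}\le Q_i^n\le \max\{Q_i^{n-1},Q_{i-1}^n\}.$$
   Context: This is the high-resolution compact inverse scheme for the nonlinear advection equation with retardation $\partial_t\theta(q)+v(t)\partial_xq=0$ (e.g. $\theta(q)=\kappa q$ plus a nonlinear sorption term), in conservative form $h_i\Theta_i^{n+1/2}+\tau v^nQ_i^n=h_i\Theta_i^{n-1/2}+\tau v^nQ_{i-1}^n$ with $\Theta_i^{n+1/2}=\Theta_i^n+\frac12\Psi(r_i^n)(\Theta_{i-1}^{n+1}-\Theta_i^n)$; $C_i^n$ is the nonlinear local Courant number, $\Psi_{\mathrm{prev}}=\Psi(r_i^{n-1})$ the limiter value from the previous time level, $Q_i^n\approx q(x_i,t^n)$. *)

From Stdlib Require Import Reals.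
From Coquelicot Require Import Coquelicot.
Open Scope R_scope.

Definition Psi (Ctil Psi_prev wbar r : R) : R :=
  Rmax 0 (Rmin (Rmin ((2 * Ctil + Psi_prev) * r) (1 - wbar + wbar * r)) 2).

Definition lim_term (Ctil Psi_prev wbar num d : R) : R :=
  if Req_EM_T d 0 then 0 else Psi Ctil Psi_prev wbar (num / d) * d.

Definition courant (theta : R -> R) (lambda Qi Qim1 : R) : R :=
  if Req_EM_T Qi Qim1 then lambda / Derive theta Qi
  else (Qi - Qim1) / (theta Qi - theta Qim1) * lambda.

(* Eliminating the scheme's right-hand side leaves the update
   (1 + C) (Θ_i^n - Θ_{i-1}^n) = -μ (Θ_{i-1}^n - Θ_i^{n-1}) with C the local
   Courant number and μ = 1 - Ψ_prev/2 + φ/2, where the limited term equals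
   φ (Θ_{i-1}^n - Θ_i^{n-1}) for a slope 0 <= φ <= 2 C~ + Ψ_prev.  Hence
   0 <= μ <= 1 + C~ <= 1 + C, so Θ_i^n is a convex combination of Θ_{i-1}^n
   and Θ_i^{n-1}, and strict monotonicity of θ transfers this to Q_i^n. *)
From Stdlib Require Import Reals Lra Psatz.
From Coquelicot Require Import Coquelicot.
Open Scope R_scope.

Lemma Psi_ge0 Ct Pp w r : 0 <= Psi Ct Pp w r.
Proof. unfold Psi; apply Rmax_l. Qed.

Lemma Psi_le_slope Ct Pp w r : Psi Ct Pp w r <= Rmax 0 ((2 * Ct + Pp) * r).
Proof. unfold Psi, Rmax, Rmin; repeat destruct Rle_dec; lra. Qed.

Lemma lim_term_slope Ct Pp w a d :
  0 <= 2 * Ct + Pp ->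
  exists phi, 0 <= phi <= 2 * Ct + Pp /\ lim_term Ct Pp w a d = phi * a.
Proof.
  intros Hk; unfold lim_term.
  destruct (Req_EM_T d 0) as [_ | Hd].
  { exists 0; split; [lra | ring]. }
  pose proof (Psi_ge0 Ct Pp w (a / d)) as Hge.
  pose proof (Psi_le_slope Ct Pp w (a / d)) as Hle.
  set (P := Psi Ct Pp w (a / d)) in *.
  destruct (Rle_or_lt (a / d) 0) as [Hr | Hr].
  - assert (HP0 : P = 0) by (unfold Rmax in Hle; destruct Rle_dec; nra).
    exists 0; rewrite HP0; split; [lra | ring].
  - assert (HPk : P <= (2 * Ct + Pp) * (a / d))
      by (unfold Rmax in Hle; destruct Rle_dec; nra).
    assert (Ha : a <> 0) by (intros ->; unfold Rdiv in Hr; lra).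
    exists (P / (a / d)); split.
    + split; [apply Rdiv_le_0_compat; lra |].
      apply Rmult_le_reg_r with (a / d); [lra |].
      unfold Rdiv at 1; rewrite Rmult_assoc, Rinv_l; lra.
    + field; auto.
Qed.

Lemma courant_secant theta lambda Qi Qim1 :
  theta Qi <> theta Qim1 ->
  lambda * (Qi - Qim1) = courant theta lambda Qi Qim1 * (theta Qi - theta Qim1).
Proof.
  intros Hne; unfold courant.
  destruct (Req_EM_T Qi Qim1) as [-> | _]; [congruence |].
  field; intros H; apply Hne; lra.
Qed.

Lemma Rmin_Rmax_convex x y s :
  0 <= s <= 1 -> Rmin x y <= x + s * (y - x) <= Rmax x y.
Proof. intros Hs; unfold Rmin, Rmax; destruct Rle_dec; split; nra. Qed.

Lemma damped_update_between C mu t tl tp :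
  0 <= C -> 0 <= mu <= 1 + C ->
  (1 + C) * (t - tl) = - mu * (tl - tp) ->
  Rmin tp tl <= t <= Rmax tp tl.
Proof.
  intros HC Hmu Hupd.
  assert (Ht : t = tl + mu / (1 + C) * (tp - tl)) by (field_simplify_eq; lra).
  assert (Hs : 0 <= mu / (1 + C) <= 1).
  { split; [apply Rdiv_le_0_compat; lra |].
    apply Rmult_le_reg_r with (1 + C); [lra |].
    unfold Rdiv; rewrite Rmult_assoc, Rinv_l; lra. }
  rewrite Rmin_comm, Rmax_comm, Ht; exact (Rmin_Rmax_convex tl tp _ Hs).
Qed.

Lemma strict_incr_between (f : R -> R) a b q :
  (forall x y, x < y -> f x < f y) ->
  Rmin (f a) (f b) <= f q <= Rmax (f a) (f b) -> Rmin a b <= q <= Rmax a b.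
Proof.
  intros Hf Hq.
  assert (Hmono : forall x y, x <= y -> f x <= f y).
  { intros x y [Hlt | ->]; [apply Rlt_le, Hf, Hlt | lra]. }
  assert (Hrefl : forall x y, f x <= f y -> x <= y).
  { intros x y Hxy; destruct (Rle_or_lt x y) as [| Hlt]; auto.
    apply Hf in Hlt; lra. }
  destruct (Rle_or_lt a b) as [Hab | Hba].
  - pose proof (Hmono _ _ Hab).
    rewrite Rmin_left, Rmax_right in * by lra.
    split; apply Hrefl; lra.
  - pose proof (Hf _ _ Hba).
    rewrite Rmin_right, Rmax_left in * by lra.
    split; apply Hrefl; lra.
Qed.

Theorem mainTheorem6
  (theta : R -> R)
  (Htheta_diff : forall x, ex_derive theta x)
  (Htheta_C1 : forall x, continuous (Derive theta) x)
  (Htheta_incr : forall x y, x < y -> theta x < theta y)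
  (tau h v : R) (Htau : 0 < tau) (Hh : 0 < h) (Hv : 0 < v)
  (wbar Psi_prev Ctil : R)
  (Hw : 0 <= wbar <= 1) (HP : 0 <= Psi_prev <= 2) (HC : 0 < Ctil)
  (Qin Qinm1 Qi1n Qi1np1 : R)
  (Hscheme :
     let lambda := tau * v / h in
     theta Qin
     + / 2 * lim_term Ctil Psi_prev wbar
               (theta Qi1n - theta Qinm1) (theta Qi1np1 - theta Qin)
     + lambda * Qin
     = theta Qinm1 + / 2 * Psi_prev * (theta Qi1n - theta Qinm1)
       + lambda * Qi1n)
  (HCourant : Ctil <= courant theta (tau * v / h) Qin Qi1n) :
  Rmin Qinm1 Qi1n <= Qin <= Rmax Qinm1 Qi1n.
Proof.
  destruct (Req_EM_T Qin Qi1n) as [-> | Hne].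
  { split; [apply Rmin_r | apply Rmax_r]. }
  assert (Htheta_ne : theta Qin <> theta Qi1n).
  { intros Heq; destruct (Rdichotomy _ _ Hne) as [Hlt | Hlt];
      apply Htheta_incr in Hlt; lra. }
  pose proof (courant_secant theta (tau * v / h) _ _ Htheta_ne) as Hsecant.
  set (C := courant theta (tau * v / h) Qin Qi1n) in *.
  destruct (lim_term_slope Ctil Psi_prev wbar (theta Qi1n - theta Qinm1)
              (theta Qi1np1 - theta Qin)) as [phi [Hphi Hlim]]; [lra |].
  simpl in Hscheme; rewrite Hlim in Hscheme.
  apply (strict_incr_between theta); auto.
  apply (damped_update_between C (1 - Psi_prev / 2 + phi / 2)
           _ (theta Qi1n)); lra.
Qed.
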